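(* Let $G$ be a finitely generated group which fits in an exact sequence $1\to L\to G\to\mathbb{Z}\to1$ with $L$ locally finite, and let $\mathcal{S}$ be a Schreier graph of $G$ (i.e. $G$ acts on the vertex set $\mathcal{S}$). Let $\pi:G\to\mathcal{U}(\ell^2(\mathcal{S}))$ be a unitary representation with no nonzero fixed vector. If there exists a nonzero harmonic $1$-cocycle $b:G\to\ell^2(\mathcal{S})$ for $\pi$ (harmonic with respect to some symmetric probability measure $\mu$ on $G$ with finite generating support), then $G$ does not have Shalom's property $H_{\mathrm{FD}}$.
   Context: A group is locally finite if every finite subset lies in a finite subgroup. A $1$-cocycle for $\pi$ satisfies $b(gh)=b(g)+\pi_g b(h)$; it is $\mu$-harmonic if $\sum_g b(g)\mu(g)=0$. A finitely generated group $G$ has property $H_{\mathrm{FD}}$ if every unitary representation with nonzero first reduced cohomology (1-cocycles modulo the closure, for pointwise convergence, of 1-coboundaries) admits a nonzero finite-dimensional subrepresentation. *)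

From HB Require Import structures.
From mathcomp Require Import all_boot all_order all_algebra.
From mathcomp Require Import monoid.
From mathcomp Require Import complex.
From mathcomp Require Import reals.
Set Implicit Arguments. Unset Strict Implicit. Unset Printing Implicit Defensive.
Import Order.TTheory GRing.Theory Num.Theory.
Local Open Scope ring_scope.

Section GroupNotions.
Variable G : groupType.

Definition is_subgroup (H : G -> Prop) : Prop :=
  [/\ H 1%g, (forall x y, H x -> H y -> H (x * y)%g) & (forall x, H x -> H (x^-1)%g)].

Definition in_generated (A : G -> Prop) (g : G) : Prop :=
  forall H, is_subgroup H -> (forall a, A a -> H a) -> H g.

Definition finitely_generated : Prop :=
  exists s : seq G, forall g, in_generated (fun a => a \in s) g.

Definition finite_pred (H : G -> Prop) : Prop :=
  exists s : seq G, forall x, H x -> x \in s.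

Definition locally_finite_subgroup (L : G -> Prop) : Prop :=
  forall s : seq G, (forall x, x \in s -> L x) ->
  exists H : G -> Prop, [/\ is_subgroup H, finite_pred H,
                            (forall x, H x -> L x) & (forall x, x \in s -> H x)].

(* G fits in an exact sequence 1 -> L -> G -> Z -> 1 with L locally finite:
   there is a surjective homomorphism G -> Z whose kernel is locally finite. *)
Definition locally_finite_by_Z : Prop :=
  exists phi : G -> int,
    [/\ (forall g h, phi (g * h)%g = phi g + phi h),
        (forall n : int, exists g, phi g = n)
      & locally_finite_subgroup (fun g => phi g = 0)].

Variable R : realType.

Definition supp_list (mu : G -> R) (s : seq G) : Prop :=
  uniq s /\ (forall g, mu g != 0 -> g \in s).

Definition sym_fin_gen_prob (mu : G -> R) : Prop :=
  [/\ (forall g, 0 <= mu g),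
      (exists s, supp_list mu s /\ \sum_(g <- s) mu g = 1),
      (forall g, mu (g^-1)%g = mu g)
    & (forall g, in_generated (fun a => mu a != 0) g)].

End GroupNotions.

Section Hilbert.
Variable R : realType.
Local Notation C := R[i].

Definition is_inner_product (V : lmodType C) (dot : V -> V -> C) : Prop :=
  [/\ (forall (a : C) u v w, dot (a *: u + v) w = a * dot u w + dot v w),
      (forall u v, dot v u = conjc (dot u v)),
      (forall u, 0 <= dot u u)
    & (forall u, dot u u = 0 -> u = 0)].

Definition hnorm2 (V : lmodType C) (dot : V -> V -> C) (u : V) : R :=
  complex.Re (dot u u).

Definition is_complete (V : lmodType C) (dot : V -> V -> C) : Prop :=
  forall u : nat -> V,
    (forall e : R, 0 < e -> exists N, forall m n, (N <= m)%N -> (N <= n)%N ->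
        hnorm2 dot (u m - u n) < e) ->
    exists v : V, forall e : R, 0 < e -> exists N, forall n, (N <= n)%N ->
        hnorm2 dot (u n - v) < e.

Definition is_hilbert (V : lmodType C) (dot : V -> V -> C) : Prop :=
  is_inner_product dot /\ is_complete dot.

Variable G : groupType.

Definition unitary_rep (V : lmodType C) (dot : V -> V -> C) (pi : G -> V -> V)
  : Prop :=
  [/\ (forall g (a : C) u v, pi g (a *: u + v) = a *: pi g u + pi g v),
      (forall g u v, dot (pi g u) (pi g v) = dot u v),
      (forall u, pi 1%g u = u)
    & (forall g h u, pi (g * h)%g u = pi g (pi h u))].

Definition cocycle (V : lmodType C) (pi : G -> V -> V) (b : G -> V) : Prop :=
  forall g h, b (g * h)%g = b g + pi g (b h).

(* b is in the closure, for the topology of pointwise convergence, of the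
   space of 1-coboundaries g |-> pi g v - v. *)
Definition in_closure_coboundaries (V : lmodType C) (dot : V -> V -> C)
  (pi : G -> V -> V) (b : G -> V) : Prop :=
  forall (F : seq G) (e : R), 0 < e ->
    exists v : V, forall g, g \in F -> hnorm2 dot (b g - (pi g v - v)) < e.

Definition reduced_H1_nonzero (V : lmodType C) (dot : V -> V -> C)
  (pi : G -> V -> V) : Prop :=
  exists b : G -> V, cocycle pi b /\ ~ in_closure_coboundaries dot pi b.

Definition in_span (V : lmodType C) (s : seq V) (w : V) : Prop :=
  exists c : 'I_(size s) -> C, w = \sum_(i < size s) c i *: nth 0 s i.

Definition has_nonzero_fd_subrep (V : lmodType C) (pi : G -> V -> V) : Prop :=
  exists s : seq V,
    (exists w, in_span s w /\ w != 0) /\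
    (forall g w, in_span s w -> in_span s (pi g w)).

Definition property_HFD : Prop :=
  forall (V : lmodType C) (dot : V -> V -> C), is_hilbert dot ->
  forall pi : G -> V -> V, unitary_rep dot pi ->
    reduced_H1_nonzero dot pi -> has_nonzero_fd_subrep pi.

Variable S : eqType.

Definition is_action (act : G -> S -> S) : Prop :=
  (forall x, act 1%g x = x) /\ (forall g h x, act (g * h)%g x = act g (act h x)).

Definition cabs2 (z : C) : R := complex.Re z ^+ 2 + complex.Im z ^+ 2.

Definition in_l2 (f : S -> C) : Prop :=
  exists M : R, forall s : seq S, uniq s -> \sum_(x <- s) cabs2 (f x) <= M.

Definition quasi_regular (act : G -> S -> S) (g : G) (f : S -> C) : S -> C :=
  fun x => f (act (g^-1)%g x).

End Hilbert.

From HB Require Import structures.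
From mathcomp Require Import all_boot all_order all_algebra.
From mathcomp Require Import monoid complex reals.
From mathcomp Require Import boolp classical_sets.
From mathcomp Require Import lra ring.
Import Order.TTheory GRing.Theory Num.Theory.
Set Implicit Arguments. Unset Strict Implicit. Unset Printing Implicit Defensive.
Local Open Scope ring_scope.

(* Let b be a nonzero mu-harmonic cocycle.  For every vector v,
     sum_g mu(g) |b(g) - (pi(g) v - v)|^2
       = sum_g mu(g) |b(g)|^2 + sum_g mu(g) |pi(g) v - v|^2,
   since the cross terms vanish by harmonicity and the symmetry of mu.  Hence if
   b were a pointwise limit of coboundaries it would vanish on the support of mu,
   which generates G, so b = 0: the reduced cohomology of l^2(S) is nonzero.
   On the other hand l^2(S) has no nonzero finite-dimensional subrepresentation W:
   the function x |-> sup_{w in W, w <> 0} |w(x)|^2 / |w|^2 would be nonzero,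
   G-invariant, and square-summable, being at most sum_i |e_i(x)|^2 for an
   orthonormal basis (e_i) of W, whose sum over S is dim W.  This contradicts the
   absence of invariant vectors. *)

Section ComplexModulus.
Variable R : realType.
Implicit Types (x : R) (z w : R[i]).

Lemma cabs2_ge0 z : 0 <= cabs2 z.
Proof. case: z => a b; rewrite /cabs2 /=; nra. Qed.

Lemma cabs2_eq0 z : cabs2 z = 0 -> z = 0.
Proof.
case: z => a b; rewrite /cabs2 /= => ab0.
have -> : a = 0 by nra.
by have -> : b = 0 by nra.
Qed.

Lemma cabs20 : cabs2 (0 : R[i]) = 0.
Proof. by rewrite /cabs2 /= expr0n addr0. Qed.

Lemma cabs2_real x : cabs2 x%:C%C = x ^+ 2.
Proof. by rewrite /cabs2 /= expr0n addr0. Qed.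

Lemma cabs2M z w : cabs2 (z * w) = cabs2 z * cabs2 w.
Proof. case: z => a b; case: w => c d; simpc; rewrite /cabs2 /=; ring. Qed.

Lemma cabs2N z : cabs2 (- z) = cabs2 z.
Proof. case: z => a b; simpc; rewrite /cabs2 /=; ring. Qed.

Lemma cabs2J z : cabs2 z^*%C = cabs2 z.
Proof. case: z => a b; simpc; rewrite /cabs2 /=; ring. Qed.

Lemma cabs2D_le z w : cabs2 (z + w) <= 2 * (cabs2 z + cabs2 w).
Proof.
case: z => a b; case: w => c d; simpc; rewrite /cabs2 /=.
have := sqr_ge0 (a - c); have := sqr_ge0 (b - d); nra.
Qed.

Lemma cabs2_subC z w : cabs2 (z - w) = cabs2 (w - z).
Proof. by rewrite -cabs2N opprB. Qed.

Lemma cabs2B_le z w t : cabs2 (z - t) <= 2 * (cabs2 (z - w) + cabs2 (w - t)).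
Proof.
have -> : z - t = (z - w) + (w - t) by ring.
exact: cabs2D_le.
Qed.

Lemma mulcJ z : z * z^*%C = (cabs2 z)%:C%C.
Proof.
case: z => a b; simpc; rewrite /cabs2 /=.
by apply/eqP; rewrite eq_complex /=; apply/andP; split; apply/eqP; ring.
Qed.

Lemma Re_realM x z : complex.Re (x%:C%C * z) = x * complex.Re z.
Proof. case: z => a b; simpc; rewrite /=; ring. Qed.

Lemma conjc_realM x z : (x%:C%C * z)^*%C = x%:C%C * z^*%C.
Proof. by case: z => a b; simpc. Qed.

Lemma Re_sqr_le_cabs2 z : complex.Re z ^+ 2 <= cabs2 z.
Proof. case: z => a b; rewrite /cabs2 /=; nra. Qed.

Lemma Im_sqr_le_cabs2 z : complex.Im z ^+ 2 <= cabs2 z.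
Proof. case: z => a b; rewrite /cabs2 /=; nra. Qed.

Lemma cabs2_lt z (e : R) : 0 < e ->
  `|complex.Re z| < Num.min 1 (e / 4) -> `|complex.Im z| < Num.min 1 (e / 4) ->
  cabs2 z < e.
Proof.
case: z => a b /= e0; rewrite /cabs2 /= !lt_min => /andP[a1 ae] /andP[b1 be].
have sqr_le_norm (t : R) : `|t| < 1 -> t ^+ 2 <= `|t|.
  by move=> t1; have := normr_ge0 t; rewrite -real_normK ?num_real //; nra.
have := sqr_le_norm a a1; have := sqr_le_norm b b1; lra.
Qed.

Lemma norm_Re_mulJ_le z w : `|complex.Re (z * w^*%C)| <= cabs2 z + cabs2 w.
Proof.
case: z => a b; case: w => c d; simpc; rewrite /cabs2 /= ler_norml.
have := sqr_ge0 (a - c); have := sqr_ge0 (b - d).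
have := sqr_ge0 (a + c); have := sqr_ge0 (b + d).
by move=> *; apply/andP; split; nra.
Qed.

Lemma norm_Im_mulJ_le z w : `|complex.Im (z * w^*%C)| <= cabs2 z + cabs2 w.
Proof.
case: z => a b; case: w => c d; simpc; rewrite /cabs2 /= ler_norml.
have := sqr_ge0 (a - d); have := sqr_ge0 (b - c).
have := sqr_ge0 (a + d); have := sqr_ge0 (b + c).
by move=> *; apply/andP; split; nra.
Qed.

End ComplexModulus.

Section InnerProduct.
Variables (R : realType) (V : lmodType R[i]) (dot : V -> V -> R[i]).
Hypothesis dot_inner : is_inner_product dot.
Local Notation C := R[i].
Implicit Types (a : C) (u v w : V).

Lemma dotC u v : dot v u = (dot u v)^*%C.
Proof. by case: dot_inner => _ dotC _ _; apply: dotC. Qed.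

Lemma dot_self_eq0 u : dot u u = 0 -> u = 0.
Proof. by case: dot_inner => _ _ _; apply. Qed.

Lemma dot_linear a u v w : dot (a *: u + v) w = a * dot u w + dot v w.
Proof. by case: dot_inner => dot_linear _ _ _; apply: dot_linear. Qed.

Lemma dot0l w : dot 0 w = 0.
Proof.
have := dot_linear 1 0 0 w; rewrite scaler0 !addr0 mul1r => dot00.
by apply: (addrI (dot 0 w)); rewrite addr0 -dot00.
Qed.

Lemma dotDl u v w : dot (u + v) w = dot u w + dot v w.
Proof. by have := dot_linear 1 u v w; rewrite scale1r mul1r. Qed.

Lemma dotZl a u w : dot (a *: u) w = a * dot u w.
Proof. by rewrite -[a *: u]addr0 dot_linear dot0l addr0. Qed.

Lemma dotNl u w : dot (- u) w = - dot u w.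
Proof. by rewrite -scaleN1r dotZl mulN1r. Qed.

Lemma dotBl u v w : dot (u - v) w = dot u w - dot v w.
Proof. by rewrite dotDl dotNl. Qed.

Lemma dot0r w : dot w 0 = 0.
Proof. by rewrite dotC dot0l conjc0. Qed.

Lemma dotZr a u w : dot w (a *: u) = a^*%C * dot w u.
Proof. by rewrite dotC dotZl rmorphM /= -dotC. Qed.

Lemma dotBr u v w : dot w (u - v) = dot w u - dot w v.
Proof. by rewrite dotC dotBl rmorphB /= -!dotC. Qed.

Lemma dot_suml (I : Type) (r : seq I) (F : I -> V) w :
  dot (\sum_(i <- r) F i) w = \sum_(i <- r) dot (F i) w.
Proof.
elim: r => [|i r IH]; first by rewrite !big_nil dot0l.
by rewrite !big_cons dotDl IH.
Qed.

Lemma dot_sumr (I : Type) (r : seq I) (F : I -> V) w :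
  dot w (\sum_(i <- r) F i) = \sum_(i <- r) dot w (F i).
Proof. by rewrite dotC dot_suml rmorph_sum /=; apply: eq_bigr => i _; rewrite -dotC. Qed.

Lemma dot_selfE u : dot u u = (hnorm2 dot u)%:C%C.
Proof.
case: dot_inner => _ _ /(_ u) + _; rewrite /hnorm2 lecE /=.
by case: (dot u u) => a b /= /andP[/eqP-> _].
Qed.

Lemma hnorm2_ge0 u : 0 <= hnorm2 dot u.
Proof. by case: dot_inner => _ _ /(_ u); rewrite dot_selfE ler0c. Qed.

Lemma hnorm2_eq0 u : hnorm2 dot u = 0 -> u = 0.
Proof. by move=> u0; apply: dot_self_eq0; rewrite dot_selfE u0. Qed.

Lemma hnorm2_gt0 u : u != 0 -> 0 < hnorm2 dot u.
Proof. by move=> /eqP u_neq0; rewrite lt_def hnorm2_ge0 andbT; apply/eqP => /hnorm2_eq0. Qed.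

Lemma hnorm2B u v :
  hnorm2 dot (u - v) = hnorm2 dot u + hnorm2 dot v - 2 * complex.Re (dot u v).
Proof.
have ReJ (z : C) : complex.Re z^*%C = complex.Re z by case: z.
rewrite /hnorm2 dotBl !dotBr (dotC u v) !raddfB /= ReJ; lra.
Qed.

(* Expand [0 <= |(hnorm2 v) u - (dot u v) v|^2]. *)
Lemma cauchy_schwarz u v : cabs2 (dot u v) <= hnorm2 dot u * hnorm2 dot v.
Proof.
have [v0|v_neq0] := eqVneq v 0; first by rewrite v0 dot0r cabs20 /hnorm2 dot0r mulr0.
have nv_gt0 := hnorm2_gt0 v_neq0.
set nu := hnorm2 dot u; set nv := hnorm2 dot v; set d := dot u v.
have := hnorm2_ge0 (nv%:C%C *: u - d *: v).
rewrite /hnorm2 dotBl !dotBr !dotZl !dotZr conjc_real (dotC u v) -/d !dot_selfE -/nu -/nv.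
have -> : (nv%:C * (nv%:C * nu%:C) - nv%:C * (d^* * d) - (d * (nv%:C * d^*) - d * (d^* * nv%:C))
   = nv%:C * (nv%:C * nu%:C - d * d^*) :> C)%C by ring.
by rewrite mulcJ -!rmorphM -rmorphB /= mul0r subr0 pmulr_rge0 // subr_ge0 mulrC.
Qed.

End InnerProduct.

Section UnitaryRep.
Variables (R : realType) (G : groupType) (V : lmodType R[i]) (dot : V -> V -> R[i]).
Variable pi : G -> V -> V.
Hypothesis pi_unitary : unitary_rep dot pi.

Lemma pi_dot g u v : dot (pi g u) (pi g v) = dot u v.
Proof. by case: pi_unitary => _ pi_dot _ _; apply: pi_dot. Qed.

Lemma pi0 g : pi g 0 = 0.
Proof.
case: pi_unitary => pi_linear _ _ _.
have := pi_linear g 1 0 0; rewrite scaler0 addr0 scale1r => pi00.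
by apply: (addrI (pi g 0)); rewrite addr0 -pi00.
Qed.

Lemma piVK g u : pi g (pi g^-1%g u) = u.
Proof. by case: pi_unitary => _ _ pi1 piM; rewrite -piM mulgV pi1. Qed.

Lemma pi_eq0 g u : (pi g u == 0) = (u == 0).
Proof.
apply/eqP/eqP => [piu0|->]; last exact: pi0.
by rewrite -[u](piVK g^-1%g) invgK piu0 pi0.
Qed.

Lemma dot_pi_adj g u v : dot u (pi g v) = dot (pi g^-1%g u) v.
Proof. by rewrite -[RHS](pi_dot g) piVK. Qed.

Section HarmonicCocycle.
Hypothesis dot_inner : is_inner_product dot.
Variable b : G -> V.
Hypothesis b_cocycle : cocycle pi b.

Lemma cocycle1 : b 1%g = 0.
Proof.
case: pi_unitary => _ _ pi1 _; have := b_cocycle 1%g 1%g; rewrite mulg1 pi1 => b11.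
by apply: (addrI (b 1%g)); rewrite addr0 -b11.
Qed.

Lemma cocycleV g : b g^-1%g = - pi g^-1%g (b g).
Proof.
have := b_cocycle g^-1%g g; rewrite mulVg cocycle1 => /esym/eqP.
by rewrite addr_eq0 => /eqP.
Qed.

Lemma cocycle_kernel_subgroup : is_subgroup (fun g => b g = 0).
Proof.
split; first exact: cocycle1.
- by move=> g h bg bh; rewrite b_cocycle bg bh pi0 addr0.
- by move=> g bg; rewrite cocycleV bg pi0 oppr0.
Qed.

Variable mu : G -> R.
Hypothesis mu_prob : sym_fin_gen_prob mu.
Hypothesis b_harmonic : forall s, supp_list mu s -> \sum_(g <- s) (mu g)%:C%C *: b g = 0.

Lemma mu_ge0 g : 0 <= mu g.
Proof. by case: mu_prob => mu_ge0 _ _ _; apply: mu_ge0. Qed.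

Lemma supp_list_inv s : supp_list mu s -> supp_list mu (map (fun g => g^-1%g) s).
Proof.
case: mu_prob => _ _ muV _ [us s_supp]; split; first by rewrite map_inj_uniq //; apply: invg_inj.
by move=> g mug; rewrite -[g]invgK; apply/map_f/s_supp; rewrite muV.
Qed.

(* Both [sum mu(g) <b g, v>] and [sum mu(g) <b g, pi g v>] vanish: the first by
   harmonicity, the second after the change of variables [g -> g^-1], using
   [b g^-1 = - pi g^-1 (b g)] and the symmetry of [mu]. *)
Lemma harmonic_dot_coboundary s v : supp_list mu s ->
  \sum_(g <- s) (mu g)%:C%C * dot (b g) (pi g v - v) = 0.
Proof.
move=> s_supp; case: mu_prob => _ _ muV _.
have dot_b_v : \sum_(g <- s) (mu g)%:C%C * dot (b g) v = 0.
  rewrite -[RHS](dot0l dot_inner v) -(b_harmonic s_supp) (dot_suml dot_inner).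
  by apply: eq_bigr => g _; rewrite (dotZl dot_inner).
have dot_b_piv : \sum_(g <- s) (mu g)%:C%C * dot (b g) (pi g v) = 0.
  rewrite -[RHS]oppr0 -[in RHS](dot0l dot_inner v) -(b_harmonic (supp_list_inv s_supp)).
  rewrite big_map (dot_suml dot_inner) -sumrN; apply: eq_bigr => g _.
  by rewrite dot_pi_adj (dotZl dot_inner) cocycleV (dotNl dot_inner) muV mulrN opprK.
by under eq_bigr do rewrite (dotBr dot_inner) mulrBr; rewrite sumrB dot_b_v dot_b_piv subr0.
Qed.

Lemma harmonic_energy_le s v : supp_list mu s ->
  \sum_(g <- s) mu g * hnorm2 dot (b g) <=
  \sum_(g <- s) mu g * hnorm2 dot (b g - (pi g v - v)).
Proof.
move=> s_supp; pose c g := pi g v - v.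
have cross : \sum_(g <- s) mu g * complex.Re (dot (b g) (c g)) = 0.
  transitivity (complex.Re (\sum_(g <- s) (mu g)%:C%C * dot (b g) (c g)));
    last by rewrite harmonic_dot_coboundary.
  by rewrite raddf_sum /=; apply: eq_bigr => g _; rewrite Re_realM.
have expand g : mu g * hnorm2 dot (b g - c g) = mu g * hnorm2 dot (b g) +
    mu g * hnorm2 dot (c g) - 2 * (mu g * complex.Re (dot (b g) (c g))).
  by rewrite (hnorm2B dot_inner); ring.
rewrite (eq_bigr _ (fun g _ => expand g)) sumrB big_split /= -mulr_sumr cross.
by rewrite mulr0 subr0 lerDl sumr_ge0 // => g _; rewrite mulr_ge0 ?mu_ge0 ?hnorm2_ge0.
Qed.

Lemma harmonic_cocycle_not_in_closure :
  (exists g, b g != 0) -> ~ in_closure_coboundaries dot pi b.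
Proof.
move=> [g0 bg0] b_closure; case: mu_prob => _ [s [s_supp mu_sum1]] _ mu_gen.
have terms_ge0 g : 0 <= mu g * hnorm2 dot (b g) by rewrite mulr_ge0 ?mu_ge0 ?hnorm2_ge0.
have energy_eq0 : \sum_(g <- s) mu g * hnorm2 dot (b g) = 0.
  apply/le_anti; rewrite sumr_ge0 // andbT; apply/ler_addgt0Pr => e e0.
  have [v hv] := b_closure s e e0; apply: le_trans (harmonic_energy_le v s_supp) _.
  rewrite add0r -[e]mul1r -mu_sum1 mulr_suml big_seq [X in _ <= X]big_seq.
  by apply: ler_sum => g gs; rewrite ler_wpM2l ?mu_ge0 ?ltW ?hv.
have b_supp g : mu g != 0 -> b g = 0.
  move=> mug; move/eqP: energy_eq0; rewrite (psumr_eq0 _ (fun g _ => terms_ge0 g)).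
  move/allP/(_ g (s_supp.2 g mug)); rewrite /= mulf_eq0 (negbTE mug) /=.
  by move/eqP/(hnorm2_eq0 dot_inner).
by move/eqP: bg0; apply; apply: mu_gen cocycle_kernel_subgroup _ => g; apply: b_supp.
Qed.

End HarmonicCocycle.

End UnitaryRep.

Section GramSchmidt.
Variables (R : realType) (V : lmodType R[i]).
Local Notation C := R[i].
Implicit Types (s e : seq V) (u v w : V).

(* [in_span] with [nat]-indexed coefficients, convenient for induction on [s]. *)
Definition nspan s w := exists c : nat -> C, w = \sum_(0 <= i < size s) c i *: s`_i.

Lemma in_spanE s w : in_span s w <-> nspan s w.
Proof.
split=> [[c ->]|[c ->]]; last by exists (fun k => c (val k)); rewrite big_mkord.
exists (fun i => if insub i is Some k then c k else 0).
by rewrite big_mkord; apply: eq_bigr => k _; rewrite valK.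
Qed.

Lemma nspan0 s : nspan s 0.
Proof. by exists (fun _ => 0); rewrite big1 // => i _; rewrite scale0r. Qed.

Lemma nspanD s a u v : nspan s u -> nspan s v -> nspan s (a *: u + v).
Proof.
move=> [c ->] [c' ->]; exists (fun i => a * c i + c' i).
by rewrite scaler_sumr -big_split; apply: eq_bigr => i _; rewrite scalerDl scalerA.
Qed.

Lemma nspanZ s a u : nspan s u -> nspan s (a *: u).
Proof. by move=> su; rewrite -[_ *: _]addr0; apply/nspanD/nspan0. Qed.

Lemma nspan_nth s i : nspan s s`_i.
Proof.
have [i_lt|i_ge] := ltnP i (size s); last by rewrite nth_default //; apply: nspan0.
exists (fun j => (j == i)%:R).
rewrite (bigD1_seq i) ?mem_index_iota ?iota_uniq //= eqxx scale1r big1 ?addr0 //.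
by move=> j /negbTE ->; rewrite scale0r.
Qed.

Lemma nspan_sum s (I : Type) (r : seq I) (F : I -> V) :
  (forall i, nspan s (F i)) -> nspan s (\sum_(i <- r) F i).
Proof.
move=> sF; elim: r => [|i r IH]; first by rewrite big_nil; apply: nspan0.
by rewrite big_cons -[F i]scale1r; apply: nspanD.
Qed.

Lemma nspan_rcons s v w : nspan (rcons s v) w <-> exists a, nspan s (w - a *: v).
Proof.
rewrite /nspan size_rcons; split=> [[c ->]|[a [c wav]]].
  exists (c (size s)), c; rewrite big_nat_recr //= nth_rcons ltnn eqxx addrK.
  by apply: eq_big_nat => i /andP[_ i_lt]; rewrite nth_rcons i_lt.
exists (fun i => if (i < size s)%N then c i else a).
rewrite big_nat_recr //= nth_rcons ltnn eqxx -[w](subrK (a *: v)) wav; congr (_ + _).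
by apply: eq_big_nat => i /andP[_ i_lt]; rewrite nth_rcons i_lt.
Qed.

Variable dot : V -> V -> C.
Hypothesis dot_inner : is_inner_product dot.

Definition orthogonal_seq e := forall i j, (i < size e)%N -> (j < size e)%N -> i != j ->
  dot e`_i e`_j = 0.

Definition orthogonal_residual e v :=
  v - \sum_(0 <= i < size e) (dot v e`_i / dot e`_i e`_i) *: e`_i.

Lemma orthogonal_residualP e v : orthogonal_seq e -> 0 \notin e ->
  let r := orthogonal_residual e v in
  nspan e (v - r) /\ forall j, (j < size e)%N -> dot r e`_j = 0.
Proof.
move=> e_orth e_neq0 r; split.
  by rewrite /r /orthogonal_residual opprB addrC subrK; apply: nspan_sum => i; apply/nspanZ/nspan_nth.
move=> j j_lt; rewrite /r /orthogonal_residual (dotBl dot_inner) (dot_suml dot_inner).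
rewrite (bigD1_seq j) ?mem_index_iota ?iota_uniq //= big1 ?addr0.
  rewrite (dotZl dot_inner) divfK ?subrr //; apply/eqP => /(dot_self_eq0 dot_inner) ej0.
  by move: e_neq0; rewrite -ej0 (mem_nth 0 j_lt).
move=> i ij; rewrite (dotZl dot_inner).
have [i_lt|i_ge] := ltnP i (size e); first by rewrite (e_orth i j i_lt j_lt ij) mulr0.
by rewrite nth_default // !(dot0l dot_inner) mulr0.
Qed.

Lemma gram_schmidt s :
  exists e, [/\ orthogonal_seq e, 0 \notin e & forall w, nspan s w -> nspan e w].
Proof.
elim/last_ind: s => [|s v [e [e_orth e_neq0 se]]].
  by exists [::]; split=> // w [c ->]; rewrite big_geq //; apply: nspan0.
have [vr r_orth] := orthogonal_residualP v e_orth e_neq0.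
set r := orthogonal_residual e v in vr r_orth.
have [r0|r_neq0] := eqVneq r 0.
  exists e; split=> // w /nspan_rcons[a /se wav].
  have ev : nspan e v by move: vr; rewrite r0 subr0.
  by rewrite -[w](subrK (a *: v)) addrC; apply: nspanD.
exists (rcons e r); split.
- move=> i j; rewrite size_rcons !ltnS !nth_rcons.
  rewrite leq_eqVlt => /orP[/eqP->|i_lt]; rewrite leq_eqVlt => /orP[/eqP->|j_lt];
    rewrite ?eqxx ?ltnn ?i_lt ?j_lt //.
  + by rewrite r_orth.
  + by rewrite (dotC dot_inner) r_orth ?conjc0.
  + exact: e_orth.
- by rewrite mem_rcons in_cons negb_or eq_sym r_neq0.
- move=> w /nspan_rcons[a wav]; apply/nspan_rcons; exists a.
  have -> : w - a *: r = (w - a *: v) + a *: (v - r) by rewrite scalerBr addrA subrK.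
  by rewrite addrC; apply: nspanD => //; apply: se.
Qed.

End GramSchmidt.

Section UnorderedSums.
Variables (R : realType) (S : eqType).
Implicit Types (h : S -> R) (f : S -> R[i]).

Definition bounded_sums h := exists M, forall s, uniq s -> \sum_(x <- s) h x <= M.

Definition psum h : R := sup [set y | exists s, uniq s /\ y = \sum_(x <- s) h x].

Definition has_sumR h l := forall e : R, 0 < e -> exists s0 : seq S,
  forall s, uniq s -> {subset s0 <= s} -> `|\sum_(x <- s) h x - l| < e.

Definition has_sumC f l := forall e : R, 0 < e -> exists s0 : seq S,
  forall s, uniq s -> {subset s0 <= s} -> cabs2 (\sum_(x <- s) f x - l) < e.

Lemma cat_subset (s1 s2 s : seq S) :
  {subset s1 ++ s2 <= s} -> {subset s1 <= s} /\ {subset s2 <= s}.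
Proof. by move=> sub; split=> x x_in; apply: sub; rewrite mem_cat x_in ?orbT. Qed.

Lemma ler_sum_uniq_subset h s0 s : (forall x, 0 <= h x) -> uniq s0 -> uniq s ->
  {subset s0 <= s} -> \sum_(x <- s0) h x <= \sum_(x <- s) h x.
Proof.
move=> h_ge0 us0 us s0s.
rewrite [X in _ <= X](bigID (mem s0)) /= -[X in _ <= X + _]big_filter.
have s0_perm : perm_eq [seq x <- s | x \in s0] s0.
  apply: uniq_perm; rewrite ?filter_uniq // => x.
  by rewrite mem_filter andb_idr //; apply: s0s.
by rewrite (perm_big _ s0_perm) lerDl sumr_ge0.
Qed.

Lemma psum_set_has_sup h : bounded_sums h ->
  has_sup [set y | exists s, uniq s /\ y = \sum_(x <- s) h x].
Proof.
case=> M hM; split; first by exists 0, [::]; rewrite big_nil.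
by exists M => y [s [us ->]]; apply: hM.
Qed.

Lemma ler_psum h s : bounded_sums h -> uniq s -> \sum_(x <- s) h x <= psum h.
Proof. by move=> hb us; apply: (sup_upper_bound (psum_set_has_sup hb)); exists s. Qed.

Lemma psum_ge0 h : bounded_sums h -> 0 <= psum h.
Proof. by move=> hb; have := ler_psum hb (isT : uniq [::]); rewrite big_nil. Qed.

Lemma psum_le h M : (forall s, uniq s -> \sum_(x <- s) h x <= M) -> psum h <= M.
Proof.
move=> hM; apply: ge_sup; first by exists 0, [::]; rewrite big_nil.
by move=> y [s [us ->]]; apply: hM.
Qed.

Lemma has_sumR_psum h : (forall x, 0 <= h x) -> bounded_sums h -> has_sumR h (psum h).
Proof.
move=> h_ge0 hb e e0.
have [y [s0 [us0 ->]] s0_close] := sup_adherent e0 (psum_set_has_sup hb).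
exists s0 => s us s0s.
have := ler_sum_uniq_subset h_ge0 us0 us s0s; have := ler_psum hb us.
rewrite /psum in s0_close * => *; rewrite ler0_norm ?subr_le0 //; lra.
Qed.

Lemma has_sumRB h1 h2 l1 l2 : has_sumR h1 l1 -> has_sumR h2 l2 ->
  has_sumR (fun x => h1 x - h2 x) (l1 - l2).
Proof.
move=> hs1 hs2 e e0; have e2 : 0 < e / 2 by rewrite divr_gt0.
have [s1 H1] := hs1 _ e2; have [s2 H2] := hs2 _ e2.
exists (s1 ++ s2) => s us /cat_subset[sub1 sub2].
have := H1 s us sub1; have := H2 s us sub2.
rewrite big_split /= sumrN => ? ?.
have -> : \sum_(x <- s) h1 x - \sum_(x <- s) h2 x - (l1 - l2) =
   (\sum_(x <- s) h1 x - l1) - (\sum_(x <- s) h2 x - l2) by ring.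
apply: le_lt_trans (ler_normB _ _) _; lra.
Qed.

(* Absolute summability: split [h] into its positive and negative parts. *)
Lemma has_sumR_abs h : bounded_sums (fun x => `|h x|) -> exists l, has_sumR h l.
Proof.
move=> [M hM].
pose hp x := (`|h x| + h x) / 2; pose hn x := (`|h x| - h x) / 2.
have h_bounds x : [/\ 0 <= hp x, hp x <= `|h x|, 0 <= hn x & hn x <= `|h x|].
  rewrite /hp /hn; have := ler_norm (h x); have := ler_norm (- h x).
  by rewrite normrN => *; split; lra.
have bounded_by_abs (k : S -> R) : (forall x, k x <= `|h x|) -> bounded_sums k.
  by move=> hk; exists M => s us; apply: le_trans (hM s us); apply: ler_sum.
have hp_sum : has_sumR hp (psum hp).
  by apply: has_sumR_psum => [x|]; [|apply: bounded_by_abs => x]; case: (h_bounds x).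
have hn_sum : has_sumR hn (psum hn).
  by apply: has_sumR_psum => [x|]; [|apply: bounded_by_abs => x]; case: (h_bounds x).
exists (psum hp - psum hn) => e e0; have [s0 hs0] := has_sumRB hp_sum hn_sum e0.
exists s0 => s us sub; rewrite (eq_bigr (fun x => hp x - hn x)); first exact: hs0.
by move=> x _; rewrite /hp /hn; field.
Qed.

Lemma has_sumC_ReIm f a b : has_sumR (fun x => complex.Re (f x)) a ->
  has_sumR (fun x => complex.Im (f x)) b -> has_sumC f (a +i* b)%C.
Proof.
move=> ha hb e e0; have e1 : 0 < Num.min 1 (e / 4) by rewrite lt_min ltr01 divr_gt0.
have [s1 H1] := ha _ e1; have [s2 H2] := hb _ e1.
exists (s1 ++ s2) => s us /cat_subset[sub1 sub2].
by apply: cabs2_lt; rewrite // raddfB raddf_sum; [apply: H1 | apply: H2].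
Qed.

Lemma has_sumC_ext f g l : f =1 g -> has_sumC f l -> has_sumC g l.
Proof.
move=> fg hs e /hs[s0 hs0]; exists s0 => s.
by rewrite -(eq_bigr _ (fun x _ => fg x)); apply: hs0.
Qed.

Lemma has_sumC_uniq f l1 l2 : has_sumC f l1 -> has_sumC f l2 -> l1 = l2.
Proof.
move=> h1 h2; apply/eqP; rewrite -subr_eq0; apply/eqP/cabs2_eq0/le_anti.
rewrite cabs2_ge0 andbT; apply/ler_addgt0Pr => e e0; rewrite add0r.
have e4 : 0 < e / 4 by rewrite divr_gt0.
have [s1 H1] := h1 _ e4; have [s2 H2] := h2 _ e4.
pose s := undup (s1 ++ s2).
have us : uniq s by apply: undup_uniq.
have /cat_subset[sub1 sub2] : {subset s1 ++ s2 <= s} by move=> x; rewrite mem_undup.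
have := H1 s us sub1; have := H2 s us sub2; set t := \sum_(x <- s) f x.
by have := cabs2B_le l1 t l2; rewrite (cabs2_subC l1 t); lra.
Qed.

Lemma has_sumC_lin f g a l1 l2 : has_sumC f l1 -> has_sumC g l2 ->
  has_sumC (fun x => a * f x + g x) (a * l1 + l2).
Proof.
move=> h1 h2 e e0; have a_ge0 := cabs2_ge0 a.
have e1 : 0 < e / (4 * (cabs2 a + 1)) by rewrite divr_gt0 // mulr_gt0 //; lra.
have e4 : 0 < e / 4 by rewrite divr_gt0.
have [s1 H1] := h1 _ e1; have [s2 H2] := h2 _ e4.
exists (s1 ++ s2) => s us /cat_subset[sub1 sub2].
have := H1 s us sub1; have := H2 s us sub2.
set df := \sum_(x <- s) f x - l1 => dge dfe.
rewrite big_split /= -mulr_sumr.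
have -> : a * \sum_(x <- s) f x + \sum_(x <- s) g x - (a * l1 + l2) =
  a * df + (\sum_(x <- s) g x - l2) by rewrite /df; ring.
apply: le_lt_trans (cabs2D_le _ _) _; rewrite cabs2M.
have : cabs2 a * cabs2 df <= e / 4.
  apply: (le_trans (ler_wpM2l a_ge0 (ltW dfe))).
  rewrite mulrA ler_pdivrMr ?mulr_gt0 //; last lra.
  by rewrite mulrC -mulrA ler_pM2l //; lra.
lra.
Qed.

Lemma has_sumC_conj f l : has_sumC f l -> has_sumC (fun x => (f x)^*%C) l^*%C.
Proof.
move=> h e /h [s0 hs0]; exists s0 => s us sub.
by rewrite -rmorph_sum -rmorphB cabs2J; apply: hs0.
Qed.

Lemma has_sumC_psum h : (forall x, 0 <= h x) -> bounded_sums h ->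
  has_sumC (fun x => (h x)%:C%C) (psum h)%:C%C.
Proof.
move=> h_ge0 hb; apply: has_sumC_ReIm; first exact: has_sumR_psum.
by move=> e e0; exists [::] => s _ _; rewrite big1 // subrr normr0.
Qed.

Lemma has_sumC_reindex f l (sigma tau : S -> S) : cancel sigma tau -> cancel tau sigma ->
  has_sumC f l -> has_sumC (f \o sigma) l.
Proof.
move=> st ts h e /h [s0 hs0]; exists (map tau s0) => s us sub.
rewrite -(big_map sigma xpredT f); apply: hs0.
  by rewrite map_inj_uniq //; apply: can_inj st.
by move=> x x0; rewrite -[x]ts; apply/map_f/sub/map_f.
Qed.

End UnorderedSums.

Section L2Space.
Variables (R : realType) (S : eqType).
Local Notation C := R[i].

Record l2 := L2 { l2f :> S -> C ; l2P : in_l2 l2f }.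

Lemma l2_ext (u v : l2) : u =1 v -> u = v.
Proof.
case: u v => [f fP] [g gP] /funext /= fg; subst g.
by rewrite (Prop_irrelevance fP gP).
Qed.

Lemma in_l2_0 : in_l2 (fun _ : S => 0 : C).
Proof. by exists 0 => s _; rewrite big1 // => x _; rewrite cabs20. Qed.

Lemma in_l2_add (f g : S -> C) : in_l2 f -> in_l2 g -> in_l2 (fun x => f x + g x).
Proof.
move=> [M1 hM1] [M2 hM2]; exists (2 * (M1 + M2)) => s us.
apply: le_trans (_ : \sum_(x <- s) 2 * (cabs2 (f x) + cabs2 (g x)) <= _).
  by apply: ler_sum => x _; apply: cabs2D_le.
by rewrite -mulr_sumr big_split /= ler_pM2l ?lerD ?hM1 ?hM2.
Qed.

Lemma in_l2_opp (f : S -> C) : in_l2 f -> in_l2 (fun x => - f x).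
Proof. by move=> [M hM]; exists M => s us; under eq_bigr do rewrite cabs2N; apply: hM. Qed.

Lemma in_l2_scale (a : C) (f : S -> C) : in_l2 f -> in_l2 (fun x => a * f x).
Proof.
move=> [M hM]; exists (cabs2 a * M) => s us.
by under eq_bigr do rewrite cabs2M; rewrite -mulr_sumr ler_wpM2l ?cabs2_ge0 ?hM.
Qed.

Definition l2_zero := L2 in_l2_0.
Definition l2_add (u v : l2) := L2 (in_l2_add (l2P u) (l2P v)).
Definition l2_opp (u : l2) := L2 (in_l2_opp (l2P u)).
Definition l2_scale (a : C) (u : l2) := L2 (in_l2_scale a (l2P u)).

Lemma l2_addA : associative l2_add.
Proof. by move=> u v w; apply: l2_ext => x /=; rewrite addrA. Qed.
Lemma l2_addC : commutative l2_add.
Proof. by move=> u v; apply: l2_ext => x /=; rewrite addrC. Qed.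
Lemma l2_add0 : left_id l2_zero l2_add.
Proof. by move=> u; apply: l2_ext => x /=; rewrite add0r. Qed.
Lemma l2_addN : left_inverse l2_zero l2_opp l2_add.
Proof. by move=> u; apply: l2_ext => x /=; rewrite addNr. Qed.

HB.instance Definition _ := gen_eqMixin l2.
HB.instance Definition _ := gen_choiceMixin l2.
HB.instance Definition _ := GRing.isZmodule.Build l2 l2_addA l2_addC l2_add0 l2_addN.

Lemma l2_scaleA a b (v : l2) : l2_scale a (l2_scale b v) = l2_scale (a * b) v.
Proof. by apply: l2_ext => x /=; rewrite mulrA. Qed.
Lemma l2_scale1 : left_id 1 l2_scale.
Proof. by move=> v; apply: l2_ext => x /=; rewrite mul1r. Qed.
Lemma l2_scaleDr : right_distributive l2_scale +%R.
Proof. by move=> a u v; apply: l2_ext => x /=; rewrite mulrDr. Qed.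
Lemma l2_scaleDl (v : l2) : {morph l2_scale^~ v : a b / a + b}.
Proof. by move=> a b; apply: l2_ext => x /=; rewrite mulrDl. Qed.

HB.instance Definition _ :=
  GRing.Zmodule_isLmodule.Build C l2 l2_scaleA l2_scale1 l2_scaleDr l2_scaleDl.

Lemma l2fD (u v : l2) x : (u + v) x = u x + v x. Proof. by []. Qed.
Lemma l2fB (u v : l2) x : (u - v) x = u x - v x. Proof. by []. Qed.
Lemma l2fZ a (u : l2) x : (a *: u) x = a * u x. Proof. by []. Qed.
Lemma l2f0 x : (0 : l2) x = 0. Proof. by []. Qed.

Lemma l2f_sum (I : Type) (r : seq I) (F : I -> l2) x :
  (\sum_(i <- r) F i) x = \sum_(i <- r) F i x.
Proof.
elim: r => [|i r IH]; first by rewrite !big_nil.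
by rewrite !big_cons l2fD IH.
Qed.

Lemma l2_neq0 (u : l2) : u != 0 -> exists x, u x != 0.
Proof.
move=> u_neq0; apply: contrapT => u_eq0; move/eqP: u_neq0; apply.
by apply: l2_ext => x; apply/eqP; apply: contrapT => /negP ux0; apply: u_eq0; exists x.
Qed.

End L2Space.

Section L2InnerProduct.
Variables (R : realType) (S : eqType).
Local Notation C := R[i].
Local Notation V := (l2 R S).

(* A chosen unordered sum of [h]; junk value [0] when [h] is not summable. *)
Definition sumR (h : S -> R) : R :=
  if pselect (exists l, has_sumR h l) is left hl then proj1_sig (cid hl) else 0.

Lemma has_sumR_sumR h : (exists l, has_sumR h l) -> has_sumR h (sumR h).
Proof. by rewrite /sumR; case: pselect => // hl _; apply: (proj2_sig (cid hl)). Qed.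

Definition l2dot (u v : V) : C :=
  let f x := u x * (v x)^*%C in
  (sumR (fun x => complex.Re (f x)) +i* sumR (fun x => complex.Im (f x)))%C.

Lemma has_sumC_l2dot (u v : V) : has_sumC (fun x => u x * (v x)^*%C) (l2dot u v).
Proof.
have [Mu hMu] := l2P u; have [Mv hMv] := l2P v.
have bounded_by_sum (k : S -> R) :
    (forall x, k x <= cabs2 (u x) + cabs2 (v x)) -> bounded_sums k.
  move=> hk; exists (Mu + Mv) => s us; apply: le_trans (ler_sum _ (fun x _ => hk x)) _.
  by rewrite big_split lerD ?hMu ?hMv.
by apply: has_sumC_ReIm; apply/has_sumR_sumR/has_sumR_abs/bounded_by_sum => x;
  [apply: norm_Re_mulJ_le | apply: norm_Im_mulJ_le].
Qed.

Lemma l2dot_eq (u v : V) l : has_sumC (fun x => u x * (v x)^*%C) l -> l2dot u v = l.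
Proof. exact/has_sumC_uniq/has_sumC_l2dot. Qed.

Lemma l2dot_self (u : V) : l2dot u u = (psum (fun x => cabs2 (u x)))%:C%C.
Proof.
apply/l2dot_eq/(has_sumC_ext _ (has_sumC_psum (fun x => cabs2_ge0 _) (l2P u))).
by move=> x; rewrite mulcJ.
Qed.

Lemma hnorm2_l2 (u : V) : hnorm2 l2dot u = psum (fun x => cabs2 (u x)).
Proof. by rewrite /hnorm2 l2dot_self. Qed.

Lemma cabs2_le_hnorm2 (u : V) x : cabs2 (u x) <= hnorm2 l2dot u.
Proof. by rewrite hnorm2_l2; have := ler_psum (l2P u) (isT : uniq [:: x]); rewrite big_seq1. Qed.

Lemma l2dot_inner : is_inner_product l2dot.
Proof.
split.
- move=> a u v w; apply/l2dot_eq.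
  apply: has_sumC_ext (has_sumC_lin a (has_sumC_l2dot u w) (has_sumC_l2dot v w)).
  by move=> x; rewrite l2fD l2fZ mulrDl mulrA.
- move=> u v; apply/l2dot_eq/(has_sumC_ext _ (has_sumC_conj (has_sumC_l2dot u v))).
  by move=> x; rewrite rmorphM /= conjcK mulrC.
- by move=> u; rewrite l2dot_self ler0c psum_ge0 //; apply: l2P.
- move=> u /(congr1 (@complex.Re R)) u0; apply: l2_ext => x.
  by apply/cabs2_eq0/le_anti; rewrite cabs2_ge0 andbT -[X in _ <= X]u0 cabs2_le_hnorm2.
Qed.

End L2InnerProduct.

Arguments l2dot {R S}.

Section L2Completeness.
Variable R : realType.
Local Notation C := R[i].

Definition liminfR (a : nat -> R) :=
  sup [set y | exists N, forall n, (N <= n)%N -> y <= a n].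

Lemma cauchy_cvg_liminfR (a : nat -> R) :
  (forall e : R, 0 < e -> exists N, forall m n, (N <= m)%N -> (N <= n)%N -> `|a m - a n| < e) ->
  forall e : R, 0 < e -> exists N, forall n, (N <= n)%N -> `|a n - liminfR a| < e.
Proof.
move=> a_cauchy e e0; have e3 : 0 < e / 3 by rewrite divr_gt0.
have [N HN] := a_cauchy _ e3.
have near_aN n : (N <= n)%N -> a N - e / 3 <= a n /\ a n <= a N + e / 3.
  by move=> Nn; have := HN n N Nn (leqnn N); rewrite ltr_norml => /andP[]; lra.
set E := [set y : R | exists N, forall n, (N <= n)%N -> y <= a n]%classic.
have E_aN : E (a N - e / 3) by exists N => n /near_aN[].
have E_ub : ubound E (a N + e / 3).
  move=> y [M HM]; have := HM (maxn M N) (leq_maxl _ _).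
  have := (near_aN (maxn M N) (leq_maxr _ _)).2; lra.
have E_sup : has_sup E by split; [exists (a N - e / 3) | exists (a N + e / 3)].
have lo : a N - e / 3 <= liminfR a by apply: sup_upper_bound.
have hi : liminfR a <= a N + e / 3 by apply: ge_sup => //; exists (a N - e / 3).
exists N => n /near_aN[? ?]; rewrite ltr_norml; apply/andP; split; lra.
Qed.

Definition liminfC (z : nat -> C) : C :=
  (liminfR (fun n => complex.Re (z n)) +i* liminfR (fun n => complex.Im (z n)))%C.

Lemma ltr_norm_sqr (t e : R) : 0 < e -> t ^+ 2 < e * e -> `|t| < e.
Proof.
move=> e0 te; rewrite ltNge; apply/negP => et.
have := real_normK (num_real t); have := normr_ge0 t; nra.
Qed.

Lemma cabs2_cauchy_cvg (z : nat -> C) :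
  (forall e : R, 0 < e -> exists N, forall m n, (N <= m)%N -> (N <= n)%N ->
     cabs2 (z m - z n) < e) ->
  forall e : R, 0 < e -> exists N, forall n, (N <= n)%N -> cabs2 (z n - liminfC z) < e.
Proof.
move=> z_cauchy e e0.
have e1 : 0 < Num.min 1 (e / 4) by rewrite lt_min ltr01 divr_gt0.
have part_cauchy (p : C -> R) : (forall w, p w ^+ 2 <= cabs2 w) -> {morph p : w w' / w - w'} ->
    forall d : R, 0 < d -> exists N, forall m n, (N <= m)%N -> (N <= n)%N ->
      `|p (z m) - p (z n)| < d.
  move=> p_le pB d d0; have [N HN] := z_cauchy (d * d) (mulr_gt0 d0 d0).
  by exists N => m n Nm Nn; apply: ltr_norm_sqr; rewrite // -pB (le_lt_trans (p_le _)) ?HN.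
have [N1 H1] := cauchy_cvg_liminfR (part_cauchy _ (@Re_sqr_le_cabs2 R) (raddfB _)) e1.
have [N2 H2] := cauchy_cvg_liminfR (part_cauchy _ (@Im_sqr_le_cabs2 R) (raddfB _)) e1.
exists (maxn N1 N2) => n; rewrite geq_max => /andP[N1n N2n].
by apply: cabs2_lt; rewrite // raddfB; [apply: H1 | apply: H2].
Qed.

Lemma eventually_sum_lt (S : eqType) (c : nat -> S -> R) (s : seq S) :
  (forall x (d : R), 0 < d -> exists N, forall n, (N <= n)%N -> c n x < d) ->
  forall d : R, 0 < d -> exists N, forall n, (N <= n)%N -> \sum_(x <- s) c n x < d.
Proof.
move=> c_small; elim: s => [|x s IH] d d0; first by exists 0%N => n _; rewrite big_nil.
have d2 : 0 < d / 2 by rewrite divr_gt0.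
have [N1 H1] := c_small x _ d2; have [N2 H2] := IH _ d2.
exists (maxn N1 N2) => n; rewrite geq_max big_cons => /andP[/H1 ? /H2 ?]; lra.
Qed.

Variable S : eqType.
Local Notation V := (l2 R S).

Definition l2_cauchy (u : nat -> V) := forall e : R, 0 < e -> exists N,
  forall m n, (N <= m)%N -> (N <= n)%N -> hnorm2 l2dot (u m - u n) < e.

(* Fatou on finite sets of points: let [m -> oo] in the bound on [u n - u m]. *)
Lemma l2_cauchy_tail (u : nat -> V) (v : S -> C) : l2_cauchy u ->
  (forall x (d : R), 0 < d -> exists N, forall n, (N <= n)%N -> cabs2 (u n x - v x) < d) ->
  forall e : R, 0 < e -> exists N, forall n, (N <= n)%N -> forall s, uniq s ->
    \sum_(x <- s) cabs2 (u n x - v x) <= 4 * e.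
Proof.
move=> u_cauchy u_cvg e e0; have [N HN] := u_cauchy e e0; exists N => n Nn s us.
have [N' HN'] := eventually_sum_lt s u_cvg e0.
pose m := maxn N N'; have Nm : (N <= m)%N by apply: leq_maxl.
have N'm : (N' <= m)%N by apply: leq_maxr.
apply: le_trans (_ : \sum_(x <- s) 2 * (cabs2 (u n x - u m x) + cabs2 (u m x - v x)) <= _).
  by apply: ler_sum => x _; apply: cabs2B_le.
rewrite -mulr_sumr big_split /=.
have : \sum_(x <- s) cabs2 (u n x - u m x) <= hnorm2 l2dot (u n - u m).
  by rewrite hnorm2_l2; exact: (ler_psum (l2P (u n - u m)) us).
have := HN n m Nn Nm; have := HN' m N'm; lra.
Qed.

Lemma l2_complete : is_complete (@l2dot R S).
Proof.
move=> u u_cauchy.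
have u_cvg x := cabs2_cauchy_cvg (z := fun n => u n x).
pose v x := liminfC (fun n => u n x).
have u_cvg_v x d : 0 < d -> exists N, forall n, (N <= n)%N -> cabs2 (u n x - v x) < d.
  apply: u_cvg => e e0; have [N HN] := u_cauchy e e0; exists N => m n Nm Nn.
  by apply: le_lt_trans (HN m n Nm Nn); rewrite -l2fB cabs2_le_hnorm2.
have tail := l2_cauchy_tail u_cauchy u_cvg_v.
have v_l2 : in_l2 v.
  have [N HN] := tail 1 ltr01; have [M HM] := l2P (u N).
  exists (2 * (4 * 1 + M)) => s us.
  apply: le_trans (_ : \sum_(x <- s) 2 * (cabs2 (u N x - v x) + cabs2 (u N x)) <= _).
    apply: ler_sum => x _.
    by have := cabs2B_le (v x) (u N x) 0; rewrite !subr0 cabs2_subC; apply.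
  by rewrite -mulr_sumr big_split /= ler_pM2l ?lerD ?HN ?HM.
exists (L2 v_l2) => e e0; have e8 : 0 < e / 8 by rewrite divr_gt0.
have [N HN] := tail _ e8; exists N => n Nn.
by rewrite hnorm2_l2; apply: le_lt_trans (psum_le (HN n Nn)) _; lra.
Qed.

End L2Completeness.

Section QuasiRegular.
Variables (R : realType) (G : groupType) (S : eqType) (act : G -> S -> S).
Hypothesis act_is_action : is_action act.
Local Notation C := R[i].
Local Notation V := (l2 R S).

Lemma actK g : cancel (act g) (act g^-1%g).
Proof. by case: act_is_action => act1 actM x; rewrite -actM mulVg act1. Qed.

Lemma actVK g : cancel (act g^-1%g) (act g).
Proof. by case: act_is_action => act1 actM x; rewrite -actM mulgV act1. Qed.

Lemma in_l2_quasi_regular g (f : S -> C) : in_l2 f -> in_l2 (quasi_regular act g f).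
Proof.
move=> [M hM]; exists M => s us.
rewrite -(big_map (act g^-1%g) xpredT (fun y => cabs2 (f y))); apply: hM.
by rewrite map_inj_uniq //; apply: can_inj (actVK g).
Qed.

Definition l2_quasi_regular g (u : V) : V := L2 (in_l2_quasi_regular g (l2P u)).

Lemma l2_quasi_regularE g (u : V) x : l2_quasi_regular g u x = u (act g^-1%g x).
Proof. by []. Qed.

Lemma l2_quasi_regular_unitary : unitary_rep l2dot l2_quasi_regular.
Proof.
case: act_is_action => act1 actM; split.
- by move=> g a u v; apply: l2_ext.
- by move=> g u v; apply/l2dot_eq; exact: (has_sumC_reindex (actVK g) (actK g) (has_sumC_l2dot u v)).
- by move=> u; apply: l2_ext => x; rewrite l2_quasi_regularE invg1 act1.
- by move=> g h u; apply: l2_ext => x; rewrite !l2_quasi_regularE invgM actM.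
Qed.

End QuasiRegular.

Arguments l2_quasi_regular R {G S act} act_is_action g u.

Section OrthogonalKernel.
Variables (R : realType) (S : eqType).
Local Notation V := (l2 R S).
Local Notation norm2 := (hnorm2 l2dot).

(* The diagonal [x |-> |P_W delta_x|^2] of the orthogonal projection onto the
   span [W] of an orthogonal family [e]. *)
Definition kernel_diag (e : seq V) x := \sum_(0 <= i < size e) cabs2 (e`_i x) / norm2 e`_i.

Lemma sum_kernel_diag_le (e : seq V) t : uniq t ->
  \sum_(x <- t) kernel_diag e x <= (size e)%:R.
Proof.
move=> ut; rewrite exchange_big /=.
apply: le_trans (_ : \sum_(0 <= i < size e) (1 : R) <= _); last by rewrite sumr_const_nat subn0.
apply: ler_sum_nat => i _; rewrite -mulr_suml; set n := norm2 e`_i.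
have sum_le_n : \sum_(x <- t) cabs2 (e`_i x) <= n by rewrite /n hnorm2_l2; apply: ler_psum (l2P _) ut.
have [n0|n_neq0] := eqVneq n 0; first by rewrite n0 invr0 mulr0.
apply: le_trans (ler_wpM2r _ sum_le_n) _; first by rewrite invr_ge0 (hnorm2_ge0 (@l2dot_inner R S)).
by rewrite mulfV.
Qed.

Section Orthogonal.
Variable e : seq V.
Hypotheses (e_orth : orthogonal_seq l2dot e) (e_neq0 : 0 \notin e).

Lemma norm2_nth_gt0 i : (i < size e)%N -> 0 < norm2 e`_i.
Proof.
move=> i_lt; apply: (hnorm2_gt0 (@l2dot_inner R S)); apply: contraNneq e_neq0 => <-.
exact: mem_nth.
Qed.

Lemma kernel_vector x : exists k : V,
  [/\ nspan e k, norm2 k = kernel_diag e x & forall w, nspan e w -> l2dot w k = w x].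
Proof.
have dot_inner := @l2dot_inner R S.
pose coef i := ((norm2 e`_i)^-1)%:C%C * (e`_i x)^*%C.
exists (\sum_(0 <= i < size e) coef i *: e`_i).
have reproduces w : nspan e w -> l2dot w (\sum_(0 <= i < size e) coef i *: e`_i) = w x.
  move=> [c ->]; rewrite (dot_suml dot_inner) l2f_sum; apply: eq_big_nat => j /andP[_ j_lt].
  rewrite (dotZl dot_inner) l2fZ (dot_sumr dot_inner) (bigD1_seq j) ?mem_index_iota ?iota_uniq //=.
  rewrite big1 ?addr0 => [|i ij]; last first.
    rewrite (dotZr dot_inner); have [i_lt|i_ge] := ltnP i (size e).
      by rewrite e_orth ?mulr0 // eq_sym.
    by rewrite (nth_default 0 i_ge) (dot0r dot_inner) mulr0.
  rewrite (dotZr dot_inner) (dot_selfE dot_inner) /coef conjc_realM conjcK.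
  by rewrite mulrAC -rmorphM mulVf ?mul1r // gt_eqF ?norm2_nth_gt0.
split=> //; first by apply: nspan_sum => i; apply/nspanZ/nspan_nth.
rewrite /hnorm2 reproduces; last by apply: nspan_sum => i; apply/nspanZ/nspan_nth.
rewrite l2f_sum raddf_sum /=; apply: eq_bigr => i _.
by rewrite /coef -mulrA Re_realM [_^*%C * _]mulrC mulcJ /= mulrC.
Qed.

Lemma cabs2_eval_le_kernel x w : nspan e w -> cabs2 (w x) <= kernel_diag e x * norm2 w.
Proof.
move=> ew; have [k [_ <- k_eval]] := kernel_vector x.
by rewrite -k_eval // mulrC; apply: cauchy_schwarz (@l2dot_inner R S) _ _.
Qed.

End Orthogonal.

End OrthogonalKernel.

Section EvaluationSup.
Variables (R : realType) (S : eqType).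
Local Notation V := (l2 R S).
Local Notation norm2 := (hnorm2 l2dot).

Definition eval_ratio (w : V) x := cabs2 (w x) / norm2 w.

(* Equal to [kernel_diag e x] for an orthogonal basis [e] of [span s], but
   defined without choosing a basis, hence manifestly [G]-invariant. *)
Definition eval_sup (s : seq V) x :=
  sup [set r | exists2 w, in_span s w /\ w != 0 & r = eval_ratio w x].

Lemma eval_ratio_ge0 w x : 0 <= eval_ratio w x.
Proof. by rewrite divr_ge0 ?cabs2_ge0 ?(hnorm2_ge0 (@l2dot_inner R S)). Qed.

Lemma eval_ratio_le1 w x : eval_ratio w x <= 1.
Proof.
have [->|w_neq0] := eqVneq w 0; first by rewrite /eval_ratio l2f0 cabs20 mul0r.
by rewrite ler_pdivrMr ?mul1r ?cabs2_le_hnorm2 ?(hnorm2_gt0 (@l2dot_inner R S)).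
Qed.

Variable s : seq V.
Hypothesis s_nontrivial : exists2 w, in_span s w & w != 0.

Lemma eval_sup_ub w x : in_span s w -> w != 0 -> eval_ratio w x <= eval_sup s x.
Proof.
move=> sw w_neq0; apply: sup_upper_bound; last by exists w.
have [w0 sw0 w0_neq0] := s_nontrivial; split; first by exists (eval_ratio w0 x), w0.
by exists 1 => _ [w' _ ->]; apply: eval_ratio_le1.
Qed.

Lemma eval_sup_ge0 x : 0 <= eval_sup s x.
Proof. by have [w sw w_neq0] := s_nontrivial; apply: le_trans (eval_ratio_ge0 w x) (eval_sup_ub x sw w_neq0). Qed.

Lemma eval_sup_le1 x : eval_sup s x <= 1.
Proof.
have [w sw w_neq0] := s_nontrivial; apply: ge_sup; first by exists (eval_ratio w x), w.
by move=> _ [w' _ ->]; apply: eval_ratio_le1.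
Qed.

Lemma eval_sup_le_kernel (e : seq V) x : orthogonal_seq l2dot e -> 0 \notin e ->
  (forall w, nspan s w -> nspan e w) -> eval_sup s x <= kernel_diag e x.
Proof.
move=> e_orth e_neq0 se; have [w sw w_neq0] := s_nontrivial.
apply: ge_sup; first by exists (eval_ratio w x), w.
move=> _ [w' [/in_spanE/se ew' w'_neq0] ->].
rewrite ler_pdivrMr ?(hnorm2_gt0 (@l2dot_inner R S)) //.
exact: cabs2_eval_le_kernel.
Qed.

Lemma in_l2_eval_sup : in_l2 (fun x => (eval_sup s x)%:C%C).
Proof.
have [e [e_orth e_neq0 se]] := gram_schmidt (@l2dot_inner R S) s.
exists (size e)%:R => t ut; apply: le_trans (sum_kernel_diag_le e ut); apply: ler_sum => x _.
rewrite cabs2_real; apply: le_trans (eval_sup_le_kernel x e_orth e_neq0 se).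
by have := eval_sup_ge0 x; have := eval_sup_le1 x; nra.
Qed.

Variables (G : groupType) (act : G -> S -> S).
Hypothesis act_is_action : is_action act.
Local Notation pi := (l2_quasi_regular R act_is_action).
Hypothesis s_invariant : forall g w, in_span s w -> in_span s (pi g w).

Lemma eval_sup_invariant g x : eval_sup s (act g^-1%g x) = eval_sup s x.
Proof.
have pi_unitary := l2_quasi_regular_unitary R act_is_action.
have norm2_pi h (w : V) : norm2 (pi h w) = norm2 w by rewrite /hnorm2 (pi_dot pi_unitary).
rewrite /eval_sup; congr sup; apply/funext => r; apply/propext.
split=> -[w [sw w_neq0] ->].
  exists (pi g w); last by rewrite /eval_ratio norm2_pi.
  by rewrite (pi_eq0 pi_unitary); split; first exact: s_invariant.
exists (pi g^-1%g w); last by rewrite /eval_ratio norm2_pi l2_quasi_regularE invgK actVK.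
by rewrite (pi_eq0 pi_unitary); split; first exact: s_invariant.
Qed.

End EvaluationSup.

Lemma l2_quasi_regular_no_fd_subrep (R : realType) (G : groupType) (S : eqType)
    (act : G -> S -> S) (act_is_action : is_action act) :
  (forall f : S -> R[i], in_l2 f ->
     (forall g x, quasi_regular act g f x = f x) -> forall x, f x = 0) ->
  ~ has_nonzero_fd_subrep (l2_quasi_regular R act_is_action).
Proof.
move=> no_fixed [s [[w [sw w_neq0]] s_invariant]].
have s_nontrivial : exists2 w, in_span s w & w != 0 by exists w.
have [x wx_neq0] := l2_neq0 w_neq0.
have sup_invariant g y :
    quasi_regular act g (fun y => (eval_sup s y)%:C%C) y = (eval_sup s y)%:C%C.
  by rewrite /quasi_regular (eval_sup_invariant s_invariant).
have /complexI sup_eq0 := no_fixed _ (in_l2_eval_sup s_nontrivial) sup_invariant x.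
have := eval_sup_ub s_nontrivial x sw w_neq0; rewrite sup_eq0 lt_geF //.
by rewrite divr_gt0 ?(hnorm2_gt0 (@l2dot_inner R S)) // lt_def cabs2_ge0 andbT;
  apply: contra wx_neq0 => /eqP/cabs2_eq0->.
Qed.

Lemma l2_hilbert (R : realType) (S : eqType) : is_hilbert (@l2dot R S).
Proof. by split; [apply: l2dot_inner | apply: l2_complete]. Qed.

Theorem proposition4p2
  (R : realType) (G : groupType) (S : eqType) (act : G -> S -> S) :
  finitely_generated G ->
  locally_finite_by_Z G ->
  is_action act ->
  (* the quasi-regular representation pi of G on l^2(S) has no nonzero
     fixed vector *)
  (forall f : S -> R[i], in_l2 f ->
     (forall g x, quasi_regular act g f x = f x) -> forall x, f x = 0) ->
  (* there is a nonzero mu-harmonic 1-cocycle b : G -> l^2(S) for pi, for some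
     symmetric probability measure mu on G with finite generating support *)
  (exists (mu : G -> R) (b : G -> S -> R[i]),
     [/\ sym_fin_gen_prob mu,
         (forall g, in_l2 (b g)),
         (forall g h x, b (g * h)%g x = b g x + quasi_regular act g (b h) x),
         (forall s, supp_list mu s ->
            forall x, \sum_(g <- s) ((mu g)%:C)%C * b g x = 0)
       & (exists g x, b g x != 0)]) ->
  ~ property_HFD R G.
Proof.
move=> _ _ act_is_action no_fixed [mu [b [mu_prob b_l2 b_cocycle b_harmonic [g0 [x0 bgx0]]]]] HFD.
pose pi := l2_quasi_regular R act_is_action.
pose B g : l2 R S := L2 (b_l2 g).
have pi_unitary : unitary_rep l2dot pi := l2_quasi_regular_unitary R act_is_action.
have B_cocycle : cocycle pi B by move=> g h; apply: l2_ext => x; apply: b_cocycle.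
have B_harmonic s : supp_list mu s -> \sum_(g <- s) (mu g)%:C%C *: B g = 0.
  move=> s_supp; apply: l2_ext => x; rewrite l2f_sum l2f0 -[RHS](b_harmonic s s_supp x).
  by apply: eq_bigr => g _; rewrite l2fZ.
have B_neq0 : exists g, B g != 0.
  by exists g0; apply: contraNneq bgx0 => Bg0; rewrite -[b g0 x0]/(B g0 x0) Bg0.
have H1_neq0 : reduced_H1_nonzero l2dot pi.
  exists B; split=> //.
  exact: (harmonic_cocycle_not_in_closure pi_unitary (@l2dot_inner R S)
    B_cocycle mu_prob B_harmonic B_neq0).
exact: l2_quasi_regular_no_fd_subrep no_fixed (HFD _ _ (l2_hilbert R S) _ pi_unitary H1_neq0).
Qed.
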